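(* Let $\mathcal{G}$ be a non-empty class of graphs such that no graph in $\mathcal{G}$ contains $K_{\aleph_0}$, and for every $G\in\mathcal{G}$ and every vertex $v\in V(G)$ the graph $G-v$ contains a subgraph isomorphic to a graph in $\mathcal{G}$. Let $\mathcal{F}$ be the class of graphs that contain no subgraph isomorphic to a graph in $\mathcal{G}$. Then there is no universal graph for $\mathcal{F}$.
   Context: All graphs are simple and countable; $G$ contains $H$ if $H$ is isomorphic to a subgraph of $G$. A graph $U$ is universal for a class $\mathcal{F}$ if $U\in\mathcal{F}$ and $U$ contains every graph in $\mathcal{F}$. *)

From Stdlib Require Import ProofIrrelevance.

Record Graph : Type := MkGraph {
  vert : Type;
  adj : vert -> vert -> Prop;
  adj_sym : forall x y, adj x y -> adj y x;
  adj_irrefl : forall x, ~ adj x x;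
  vert_countable : exists f : vert -> nat, forall x y, f x = f y -> x = y
}.

Definition contains (G H : Graph) : Prop :=
  exists f : vert H -> vert G,
    (forall x y, f x = f y -> x = y) /\
    (forall x y, adj H x y -> adj G (f x) (f y)).

Definition K_omega : Graph.
Proof.
  refine (MkGraph nat (fun x y => x <> y) _ _ _).
  - intros x y H E; apply H; symmetry; exact E.
  - intros x H; apply H; reflexivity.
  - exists (fun x => x); intros x y E; exact E.
Defined.

Definition del (G : Graph) (v : vert G) : Graph.
Proof.
  refine (MkGraph {x : vert G | x <> v}
            (fun x y => adj G (proj1_sig x) (proj1_sig y)) _ _ _).
  - intros x y H; apply adj_sym; exact H.
  - intros x; apply adj_irrefl.
  - destruct (vert_countable G) as [f Hf].
    exists (fun x => f (proj1_sig x)).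
    intros [x hx] [y hy] E; simpl in E.
    apply Hf in E; subst y.
    assert (hx = hy) as -> by (apply proof_irrelevance); reflexivity.
Defined.

Definition forbidden_class (Gc : Graph -> Prop) (X : Graph) : Prop :=
  ~ exists H, Gc H /\ contains X H.

Definition universal (F : Graph -> Prop) (U : Graph) : Prop :=
  F U /\ forall X, F X -> contains U X.

(* Suppose U were universal for F, the class of graphs containing
   no member of Gc.  Form the cone  U + v  (U with one new vertex adjacent to
   every vertex of U).
   - The cone is again in F: an embedding of some H in Gc into the cone either
     misses the apex, and then lands in U, or hits the apex at a vertex h, and
     then H - h lands in U; by hypothesis H - h contains a member of Gc.
     Either way U would contain a member of Gc.
   - Hence U contains its own cone.  Iterating such an embedding g from the
     apex gives the sequence  g(apex), g(g(apex)), ... , whose terms are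
     pairwise adjacent, i.e. a copy of K_aleph0 inside U.
   - Since every countable graph embeds in K_aleph0, U then contains every
     member of Gc (which is non-empty), contradicting U in F. *)

From Stdlib Require Import Classical Lia.

Lemma contains_trans (A B C : Graph) :
  contains A B -> contains B C -> contains A C.
Proof.
  intros [f [f_inj f_adj]] [g [g_inj g_adj]].
  exists (fun x => f (g x)); split; auto.
Qed.

Lemma forbidden_class_sub (Gc : Graph -> Prop) (X Y : Graph) :
  forbidden_class Gc X -> contains X Y -> forbidden_class Gc Y.
Proof.
  intros HX XY [H [GcH YH]].
  apply HX; exists H; split; [exact GcH | exact (contains_trans _ _ _ XY YH)].
Qed.

(* K_aleph0 contains every (countable) graph: any injection into nat is an
   embedding, since distinct vertices are adjacent in K_aleph0. *)
Lemma K_omega_contains_all (G : Graph) : contains K_omega G.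
Proof.
  destruct (vert_countable G) as [f f_inj].
  exists f; split; [exact f_inj |].
  intros x y Hxy Exy; simpl in Exy.
  apply f_inj in Exy; subst y; exact (adj_irrefl G x Hxy).
Qed.

Lemma clique_sequence_contains_K_omega (U : Graph) (s : nat -> vert U) :
  (forall n m, n < m -> adj U (s n) (s m)) -> contains U K_omega.
Proof.
  intros s_adj.
  assert (s_adj' : forall n m, n <> m -> adj U (s n) (s m)).
  { intros n m Hnm; destruct (Compare_dec.lt_eq_lt_dec n m) as [[Lt | Eq] | Gt].
    - auto.
    - contradiction.
    - apply adj_sym; auto. }
  exists s; split; [| exact s_adj'].
  intros n m E; apply NNPP; intros Hnm.
  pose proof (s_adj' n m Hnm) as A; rewrite E in A; exact (adj_irrefl U _ A).
Qed.

(* The cone over U: vertex set  option (vert U), where None is the apex,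
   adjacent to every vertex of U. *)
Definition cone (U : Graph) : Graph.
Proof.
  refine (MkGraph (option (vert U))
    (fun a b => match a, b with
                | Some x, Some y => adj U x y
                | None, Some _ | Some _, None => True
                | None, None => False
                end) _ _ _).
  - intros [x|] [y|]; simpl; auto; apply adj_sym.
  - intros [x|]; simpl; auto; apply adj_irrefl.
  - destruct (vert_countable U) as [f f_inj].
    exists (fun a => match a with None => 0 | Some x => S (f x) end).
    intros [x|] [y|] E; try discriminate; auto.
    injection E as E; apply f_inj in E; subst; reflexivity.
Defined.

(* If U contains its own cone, then U contains K_aleph0: with g the embedding
   and e = g o Some its restriction to U, the vertex e^n(g apex) is adjacent
   to e^(n+1+k)(g apex), since apex is adjacent to Some(e^k(g apex)). *)
Lemma self_cone_contains_K_omega (U : Graph) :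
  contains U (cone U) -> contains U K_omega.
Proof.
  intros [g [_ g_adj]].
  set (e := fun x => g (Some x)).
  set (s := fun n => Nat.iter n e (g None)).
  assert (iter_adj : forall n k, adj U (s n) (s (n + S k))).
  { induction n as [|n IH]; intros k.
    - exact (g_adj None (Some (s k)) I).
    - exact (g_adj (Some (s n)) (Some (s (n + S k))) (IH k)). }
  apply (clique_sequence_contains_K_omega U s).
  intros n m Hnm; replace m with (n + S (m - n - 1)) by lia; apply iter_adj.
Qed.

Definition option_get {B : Type} (o : option B) : o <> None -> B :=
  match o return o <> None -> B with
  | Some b => fun _ => b
  | None => fun H => False_rect _ (H eq_refl)
  end.

Lemma option_get_spec {B : Type} (o : option B) (H : o <> None) :
  o = Some (option_get o H).
Proof. destruct o; [reflexivity | contradiction]. Qed.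

Lemma cone_embedding_avoiding_apex (U H : Graph) (f : vert H -> vert (cone U)) :
  (forall x y, f x = f y -> x = y) ->
  (forall x y, adj H x y -> adj (cone U) (f x) (f y)) ->
  (forall x, f x <> None) ->
  contains U H.
Proof.
  intros f_inj f_adj f_avoid.
  exists (fun x => option_get (f x) (f_avoid x)); split.
  - intros x y E; apply f_inj.
    rewrite (option_get_spec _ (f_avoid x)), (option_get_spec _ (f_avoid y)), E.
    reflexivity.
  - intros x y Hxy; specialize (f_adj x y Hxy).
    rewrite (option_get_spec _ (f_avoid x)), (option_get_spec _ (f_avoid y))
      in f_adj.
    exact f_adj.
Qed.

(* If H embeds in the cone over U via a map sending h to the apex, then
   H - h embeds in U: by injectivity no other vertex reaches the apex. *)
Lemma cone_embedding_through_apex (U H : Graph) (f : vert H -> vert (cone U))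
    (h : vert H) :
  (forall x y, f x = f y -> x = y) ->
  (forall x y, adj H x y -> adj (cone U) (f x) (f y)) ->
  f h = None ->
  contains U (del H h).
Proof.
  intros f_inj f_adj f_h.
  apply (cone_embedding_avoiding_apex U (del H h) (fun x => f (proj1_sig x))).
  - intros [x hx] [y hy] E; simpl in E; apply f_inj in E; subst y.
    f_equal; apply proof_irrelevance.
  - intros x y Hxy; exact (f_adj _ _ Hxy).
  - intros [x hx] E; simpl in E; apply hx, f_inj; congruence.
Qed.

Lemma cone_forbidden_class (Gc : Graph -> Prop) (U : Graph) :
  (forall G, Gc G -> forall v : vert G, exists H, Gc H /\ contains (del G v) H) ->
  forbidden_class Gc U -> forbidden_class Gc (cone U).
Proof.
  intros Hdel HU [H [GcH [f [f_inj f_adj]]]].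
  destruct (classic (exists h, f h = None)) as [[h f_h] | no_apex].
  - destruct (Hdel H GcH h) as [H' [GcH' delH']].
    apply (forbidden_class_sub Gc U (del H h) HU
             (cone_embedding_through_apex U H f h f_inj f_adj f_h)).
    exists H'; split; assumption.
  - apply HU; exists H; split; [exact GcH |].
    apply (cone_embedding_avoiding_apex U H f f_inj f_adj).
    intros x E; apply no_apex; exists x; exact E.
Qed.

Theorem mainTheorem10 (Gc : Graph -> Prop)
  (Hne : exists G, Gc G)
  (HK : forall G, Gc G -> ~ contains G K_omega)
  (Hdel : forall G, Gc G -> forall v : vert G,
            exists H, Gc H /\ contains (del G v) H) :
  ~ exists U, universal (forbidden_class Gc) U.
Proof.
  intros [U [HU U_univ]].
  assert (U_K : contains U K_omega).
  { apply self_cone_contains_K_omega, U_univ, cone_forbidden_class; assumption. }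
  destruct Hne as [G0 GcG0].
  apply HU; exists G0; split; [exact GcG0 |].
  exact (contains_trans _ _ _ U_K (K_omega_contains_all G0)).
Qed.
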